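(* Let $n\ge2$, $r\ge1$, let $V_1,\dots,V_r\in\mathrm{Mat}(n,\mathbb{C})$ satisfy $\operatorname{tr}(V_s^*V_m)=\delta_{sm}$, and define $$P_{\mathcal T}=\sum_{s=1}^r\sum_{a,b,c,d=1}^n (V_s)_{ab}(\bar V_s)_{cd}\,E^{(n)}_{ac}\otimes E^{(n)}_{bd},\qquad A_{\mathcal T}=\sum_{s,m=1}^r E^{(r)}_{sm}\otimes\Big(\sum_{i=1}^r V_i\bar V_sV_m^tV_i^*\Big).$$ For $P\in\mathrm{Mat}(n^2,\mathbb{C})$ and real $Q>0$ consider the system $$P^*=P,\quad P^2=P,\quad Q^2(P_1P_2P_1-P_2P_1P_2)=P_1-P_2,\qquad(\ast)$$ with $P_1=P\otimes I_n$, $P_2=I_n\otimes P$. (a) If $P_{\mathcal T}$ is a nontrivial solution of $(\ast)$ and $k=\tfrac12\operatorname{rank}\big((P_{\mathcal T})_1-(P_{\mathcal T})_2\big)$, then for all integers $m\ge1$, $\operatorname{tr}(A_{\mathcal T}^m)=rn+(Q^{-2m}-1)k$. (b) If there exist a real $Q>1$ and a positive integer $k$ such that $\operatorname{tr}(A_{\mathcal T}^m)=rn+(Q^{-2m}-1)k$ for $m=1,2,3$, then $P_{\mathcal T}$ is a nontrivial solution of $(\ast)$ for this $Q$.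
   Context: $E^{(p)}_{ab}\in\mathrm{Mat}(p,\mathbb{C})$ is the matrix unit with $(E^{(p)}_{ab})_{ij}=\delta_{ai}\delta_{bj}$; $\bar V$ is entrywise complex conjugate, $V^t$ transpose, $V^*$ conjugate transpose; $\otimes$ is the Kronecker product. A solution of $(\ast)$ is trivial if $P=0$ or $P=I_n\otimes I_n$, nontrivial otherwise. *)

From HB Require Import structures.
From mathcomp Require Import all_boot all_order all_algebra.
From mathcomp Require Import reals.
From mathcomp Require Import complex mxtens.
Set Implicit Arguments. Unset Strict Implicit. Unset Printing Implicit Defensive.
Import Order.TTheory GRing.Theory Num.Theory.
Local Open Scope ring_scope.
Local Open Scope complex_scope.

Section Defs.
Variable R : realType.
Local Notation C := R[i].

Definition mxconj {m p} (A : 'M[C]_(m, p)) : 'M[C]_(m, p) := map_mx (@conjc R) A.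
Definition adj {m p} (A : 'M[C]_(m, p)) : 'M[C]_(p, m) := (mxconj A)^T.

Definition E {p} (a b : 'I_p) : 'M[C]_p := delta_mx a b.

Definition P1 {n} (P : 'M[C]_(n * n)) : 'M[C]_(n * n * n) := P *t (1%:M : 'M[C]_n).
Definition P2 {n} (P : 'M[C]_(n * n)) : 'M[C]_(n * n * n) :=
  castmx (mulnA n n n, mulnA n n n) ((1%:M : 'M[C]_n) *t P).

Definition is_solution {n} (Q : R) (P : 'M[C]_(n * n)) : Prop :=
  [/\ adj P = P, P *m P = P &
      (Q%:C) ^+ 2 *: (P1 P *m P2 P *m P1 P - P2 P *m P1 P *m P2 P) = P1 P - P2 P].

Definition nontrivial_solution {n} (Q : R) (P : 'M[C]_(n * n)) : Prop :=
  [/\ is_solution Q P, P != 0 & P != 1%:M].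

Definition PT {n r} (V : 'I_r -> 'M[C]_n) : 'M[C]_(n * n) :=
  \sum_(s < r) \sum_(a < n) \sum_(b < n) \sum_(c < n) \sum_(d < n)
    (V s a b * (mxconj (V s)) c d) *: (E a c *t E b d).

Definition AT {n r} (V : 'I_r -> 'M[C]_n) : 'M[C]_(r * n) :=
  \sum_(s < r) \sum_(m < r)
    (E s m *t (\sum_(i < r) V i *m mxconj (V s) *m (V m)^T *m adj (V i))).

End Defs.

From HB Require Import structures.
From mathcomp Require Import all_boot all_order all_algebra.
From mathcomp Require Import reals.
From mathcomp Require Import complex mxtens.
From mathcomp Require Import ring.
Import Order.TTheory GRing.Theory Num.Theory.
Local Open Scope ring_scope.
Local Open Scope complex_scope.

Set Implicit Arguments. Unset Strict Implicit. Unset Printing Implicit Defensive.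

(* Write X = P1 P2 P1, Y = P2 P1 P2 and D = P1 - P2 for two orthogonal projections of
   equal trace t.  If X - Y = q D, compressing by P1 gives X (P1 - X) = q (P1 - X), so
   tr X^m - tr X^(m+1) = q^m (t - tr X); and D^3 = (1 - q) D, so D^2 / (1 - q) is a
   projection of rank rank D, which gives tr X = t + (q - 1) rank D / 2.
   Conversely, for real q put H = X - q P1 and G = P1 - P1 P2, so that G G^* = P1 - X: the
   values of tr X, tr X^2, tr X^3 say exactly that tr (H G (H G)^* ) = 0, hence H G = 0,
   i.e. P1 E = 0 for the Hermitian E = X - Y - q D.  By symmetry P2 E = 0, so E^2 = 0 and E = 0.
   For the theorem, P_T = W W^* where the columns of the isometry W = [vecV] are the
   vectorised V_s, and A_T = L^* P1 L with L L^* = P2 for L = [liftV]; hence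
   tr A_T^m = tr (P1 P2)^m = tr X^m, and q = Q^-2. *)

Section TraceFacts.
Variable R : comPzRingType.

Lemma mxtrace_mulC_exp m p q (A : 'M[R]_(p, q)) (B : 'M[R]_(q, p)) :
  \tr ((A *m B) ^+ m.+1) = \tr ((B *m A) ^+ m.+1).
Proof.
have -> : (A *m B) ^+ m.+1 = A *m ((B *m A) ^+ m *m B).
  elim: m => [|m IHm]; first by rewrite expr1 expr0 mul1mx.
  by rewrite exprSr -mulmxE IHm [in RHS]exprSr -mulmxE !mulmxA.
by rewrite mxtrace_mulC -mulmxA [in RHS]exprSr -mulmxE.
Qed.

Lemma mxtrace_tens m p (A : 'M[R]_m) (B : 'M[R]_p) : \tr (A *t B) = \tr A * \tr B.
Proof.
rewrite /mxtrace mulr_sum; apply: eq_bigr => i.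
by case: (mxtens_indexP i) => a b; rewrite tensmxE mxtens_indexK.
Qed.

Lemma mxtraceB m (A B : 'M[R]_m) : \tr (A - B) = \tr A - \tr B.
Proof. exact: raddfB. Qed.

Lemma mxtrace_castmx p p' (e : p = p') (A : 'M[R]_p) : \tr (castmx (e, e) A) = \tr A.
Proof. by case: p' / e; rewrite castmx_id. Qed.

Lemma castmx_mulmx p p' (e : p = p') (A B : 'M[R]_p) :
  castmx (e, e) (A *m B) = castmx (e, e) A *m castmx (e, e) B.
Proof. by case: p' / e; rewrite !castmx_id. Qed.

End TraceFacts.

Lemma mxtrace_idem (F : fieldType) m (Z : 'M[F]_m) : Z *m Z = Z -> \tr Z = (\rank Z)%:R.
Proof.
move=> Z_idem; have := mulmx_base Z; have := col_base_full Z; have := row_base_free Z.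
move: (col_base Z) (row_base Z) => Cb Rb Rb_free Cb_full Z_base.
have base_inv : Rb *m Cb = 1%:M.
  apply: (row_free_inj Rb_free); apply: (row_full_inj Cb_full).
  by rewrite mul1mx !mulmxA Z_base -mulmxA Z_base Z_idem.
by rewrite -{1}Z_base mxtrace_mulC base_inv mxtrace1.
Qed.

Section Adjoint.
Variable R : realType.
Local Notation C := R[i].

Lemma adjE m p (A : 'M[C]_(m, p)) i j : adj A i j = (A j i)^*.
Proof. by rewrite !mxE. Qed.

Lemma adjK m p (A : 'M[C]_(m, p)) : adj (adj A) = A.
Proof. by apply/matrixP => i j; rewrite !adjE conjcK. Qed.

Lemma adjM m p s (A : 'M[C]_(m, p)) (B : 'M[C]_(p, s)) : adj (A *m B) = adj B *m adj A.
Proof. by rewrite /adj /mxconj map_mxM trmx_mul. Qed.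

Lemma adjD m p (A B : 'M[C]_(m, p)) : adj (A + B) = adj A + adj B.
Proof. by rewrite /adj /mxconj map_mxD linearD. Qed.

Lemma adjZ m p (a : C) (A : 'M[C]_(m, p)) : adj (a *: A) = conjc a *: adj A.
Proof. by apply/matrixP => i j; rewrite !(adjE, mxE) rmorphM. Qed.

Lemma adjB m p (A B : 'M[C]_(m, p)) : adj (A - B) = adj A - adj B.
Proof. by rewrite adjD -scaleN1r adjZ rmorphN1 scaleN1r. Qed.

Lemma adj0 m p : adj (0 : 'M[C]_(m, p)) = 0.
Proof. by apply/matrixP => i j; rewrite !(adjE, mxE) conjc0. Qed.

Lemma adj1 m : adj (1%:M : 'M[C]_m) = 1%:M.
Proof. by rewrite /adj /mxconj map_mx1 trmx1. Qed.

Lemma adj_tens m p s u (A : 'M[C]_(m, p)) (B : 'M[C]_(s, u)) :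
  adj (A *t B) = adj A *t adj B.
Proof. by rewrite /adj /mxconj map_mxT trmx_tens. Qed.

Lemma adj_castmx p p' (e : p = p') (A : 'M[C]_p) :
  adj (castmx (e, e) A) = castmx (e, e) (adj A).
Proof. by case: p' / e; rewrite !castmx_id. Qed.

Lemma mxtrace_mul_adj_eq0 m p (A : 'M[C]_(m, p)) : \tr (A *m adj A) = 0 -> A = 0.
Proof.
have entry_ge0 i j : 0 <= A i j * adj A j i by rewrite adjE mulcJ_ge0.
have diag_ge0 i : 0 <= (A *m adj A) i i by rewrite mxE sumr_ge0.
move=> tr0; apply/matrixP => i j.
have := psumr_eq0P (fun k _ => diag_ge0 k) tr0 (i := i) isT.
rewrite mxE => /(psumr_eq0P (fun k _ => entry_ge0 i k))/(_ j isT)/eqP.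
by rewrite adjE mulf_eq0 conjc_eq0 orbb mxE => /eqP.
Qed.

Lemma mul_adj_eq0 m p (A : 'M[C]_(m, p)) : A *m adj A = 0 -> A = 0.
Proof. by move=> A0; apply: mxtrace_mul_adj_eq0; rewrite A0 mxtrace0. Qed.

Lemma herm_sqr_eq0 m (A : 'M[C]_m) : adj A = A -> A *m A = 0 -> A = 0.
Proof. by move=> A_herm; rewrite -{2}A_herm; apply: mul_adj_eq0. Qed.

End Adjoint.

Lemma real_complex_invexp2 (R : realType) (Q x : R) m :
  ((Q ^- (2 * m) - 1) * x)%:C = ((Q ^- 2)%:C ^+ m - 1) * x%:C :> R[i].
Proof. by rewrite rmorphM rmorphB rmorph1 -rmorphXn exprVn -exprM. Qed.

Lemma complex_exp2_invexp2 (R : realType) (Q : R) :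
  Q != 0 -> (Q%:C) ^+ 2 * (Q ^- 2)%:C = 1 :> R[i].
Proof. by move=> Q_neq0; rewrite -rmorphXn -rmorphM mulfV ?rmorph1 ?expf_neq0. Qed.

Section TwoProjections.
Variable R : realType.
Local Notation C := R[i].
Variables (N : nat) (p1 p2 : 'M[C]_N) (t : C).
Hypotheses (p1_herm : adj p1 = p1) (p2_herm : adj p2 = p2).
Hypotheses (p1_idem : p1 *m p1 = p1) (p2_idem : p2 *m p2 = p2).
Hypotheses (tr_p1 : \tr p1 = t) (tr_p2 : \tr p2 = t).

Local Notation X := (p1 *m p2 *m p1).
Local Notation Y := (p2 *m p1 *m p2).
Local Notation D := (p1 - p2).

Lemma mulmx_p1_idem m (A : 'M[C]_(m, N)) : A *m p1 *m p1 = A *m p1.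
Proof. by rewrite -mulmxA p1_idem. Qed.

Lemma mulmx_p2_idem m (A : 'M[C]_(m, N)) : A *m p2 *m p2 = A *m p2.
Proof. by rewrite -mulmxA p2_idem. Qed.

Local Ltac idem_simpl :=
  rewrite ?(mulmxBl, mulmxBr, mulmxA, p1_idem, p2_idem, mulmx_p1_idem, mulmx_p2_idem).

Lemma mxtrace_compress_exp m : \tr (X ^+ m.+1) = \tr ((p1 *m p2) ^+ m.+1).
Proof. by rewrite -mulmxA mxtrace_mulC_exp -mulmxA p1_idem mxtrace_mulC_exp. Qed.

Lemma mxtrace_diff_sqr : \tr (D *m D) = 2 * (t - \tr X).
Proof.
rewrite -[X]expr1 mxtrace_compress_exp expr1.
idem_simpl; rewrite !mxtraceB tr_p1 tr_p2 [\tr (p2 *m p1)]mxtrace_mulC; ring.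
Qed.

Section DiffEquation.
Variable q : C.
Hypothesis XY_eq : X - Y = q *: D.

Lemma compress_eigen : X *m (p1 - X) = q *: (p1 - X).
Proof.
have := congr1 (fun A => p1 *m A *m p1) XY_eq; rewrite -scalemxAr -scalemxAl /=.
by idem_simpl.
Qed.

Lemma diff_cube : D *m D *m D = (1 - q) *: D.
Proof.
have DDp1 : D *m D *m p1 = p1 - X by idem_simpl; rewrite subrr subr0.
have DDp2 : D *m D *m p2 = p2 - Y by idem_simpl; rewrite subrr sub0r opprB.
rewrite mulmxBr DDp1 DDp2 scalerBl scale1r -XY_eq.
by rewrite !opprD !opprK addrACA.
Qed.

Lemma mxtrace_compress_rank : \tr X = t + (q - 1) * ((\rank D)%:R / 2).
Proof.
have D_herm : adj D = D by rewrite adjB p1_herm p2_herm.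
have two_neq0 : (2 : C) != 0 by rewrite pnatr_eq0.
have [q1 | q_neq1] := eqVneq q 1.
  have DD0 : D *m D = 0.
    apply: herm_sqr_eq0; first by rewrite adjM D_herm.
    by rewrite mulmxA diff_cube q1 subrr scale0r mul0mx.
  have /esym/eqP := mxtrace_diff_sqr; rewrite DD0 mxtrace0 mulf_eq0 (negbTE two_neq0).
  by rewrite subr_eq0 q1 subrr mul0r addr0 => /eqP.
have lq_neq0 : 1 - q != 0 by rewrite subr_eq0 eq_sym.
pose Z := (1 - q)^-1 *: (D *m D).
have Z_idem : Z *m Z = Z.
  rewrite -scalemxAl -scalemxAr scalerA mulmxA diff_cube -scalemxAl scalerA.
  by rewrite mulrAC -mulrA mulfV // mulr1.
have ZD : Z *m D = D by rewrite -scalemxAl diff_cube scalerA mulVf // scale1r.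
have rank_Z : \rank Z = \rank D.
  apply/eqP; rewrite eqn_leq -{2}ZD mxrankM_maxl andbT.
  by rewrite /Z scalemxAr mxrankM_maxl.
have := mxtrace_idem Z_idem; rewrite rank_Z mxtraceZ mxtrace_diff_sqr => <-.
by field; exact: lq_neq0.
Qed.

Lemma mxtrace_compress_exp_rank m :
  \tr (X ^+ m.+1) = t + (q ^+ m.+1 - 1) * ((\rank D)%:R / 2).
Proof.
have step k : \tr (X ^+ k.+2) = \tr (X ^+ k.+1) - q ^+ k.+1 * (t - \tr X).
  have Xp1 : X ^+ k.+1 *m p1 = X ^+ k.+1 by rewrite exprSr -mulmxE !mulmxA mulmx_p1_idem.
  have XS : X ^+ k.+1 *m X = X ^+ k.+2 by rewrite [in RHS]exprSr.
  have : X ^+ k.+1 *m (p1 - X) = q ^+ k.+1 *: (p1 - X).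
    elim: k {Xp1 XS} => [|k IHk]; first by rewrite expr1 compress_eigen expr1.
    by rewrite exprSr -mulmxE -mulmxA compress_eigen -scalemxAr IHk scalerA -exprS.
  move=> /(congr1 mxtrace); rewrite mulmxBr Xp1 XS mxtraceZ !mxtraceB tr_p1 => <-.
  by rewrite opprB addrC subrK.
elim: m => [|m IHm]; first by rewrite expr1 mxtrace_compress_rank expr1.
by rewrite step IHm mxtrace_compress_rank [q ^+ m.+2]exprS; ring.
Qed.

End DiffEquation.

Lemma compress_defect_gram : (p1 - p1 *m p2) *m adj (p1 - p1 *m p2) = p1 - X.
Proof. by rewrite adjB adjM p1_herm p2_herm; idem_simpl; rewrite subrr subr0. Qed.

Section TraceCondition.
Variables q k : C.
Hypothesis traces :
  forall m, (1 <= m <= 3)%N -> \tr ((p1 *m p2) ^+ m) = t + (q ^+ m - 1) * k.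

Lemma mxtrace_compress_defect : \tr ((p1 - X) *m (X - q *: p1) *m (X - q *: p1)) = 0.
Proof.
have trX m : (1 <= m.+1 <= 3)%N -> \tr (X ^+ m.+1) = t + (q ^+ m.+1 - 1) * k.
  by rewrite mxtrace_compress_exp; apply: traces.
have := trX 0%N isT; have := trX 1%N isT; have := trX 2%N isT.
have -> : X ^+ 3 = X *m X *m X by rewrite !exprS expr0 mulr1 !mulmxE mulrA.
rewrite expr2 expr1 -!mulmxE.
have p1X : p1 *m X = X by rewrite !mulmxA p1_idem.
have Xp1 : X *m p1 = X by rewrite mulmx_p1_idem.
move: X p1X Xp1 => x p1x xp1 e3 e2 e1.
(* Abstracting the powers of [x] keeps [mxtraceB] from unfolding matrix products. *)
rewrite !(mulmxBl, mulmxBr) -!(scalemxAl, scalemxAr) !(p1_idem, p1x, xp1, mulmxA).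
rewrite -[x *m x *m p1]mulmxA xp1.
move: (x *m x *m x) (x *m x) e3 e2 => x3 x2 e3 e2.
by rewrite !mxtraceB !mxtraceZ e1 e2 e3 tr_p1; ring.
Qed.

Lemma p1_mul_defect_eq0 : conjc q = q -> p1 *m (X - Y - q *: D) = 0.
Proof.
move=> q_real.
have H_herm : adj (X - q *: p1) = X - q *: p1.
  by rewrite adjB adjZ q_real !adjM p1_herm p2_herm mulmxA.
have HG0 : (X - q *: p1) *m (p1 - p1 *m p2) = 0.
  apply: mxtrace_mul_adj_eq0; rewrite adjM H_herm mulmxA -(mulmxA _ _ (adj _)).
  by rewrite compress_defect_gram -mulmxA mxtrace_mulC mxtrace_compress_defect.
rewrite -HG0 !(mulmxBl, mulmxBr) -!(scalemxAl, scalemxAr); idem_simpl.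
by rewrite scalerBr.
Qed.

End TraceCondition.

End TwoProjections.

Section SymmetricTraceCondition.
Variable R : realType.
Local Notation C := R[i].
Variables (N : nat) (p1 p2 : 'M[C]_N) (t q k : C).
Hypotheses (p1_herm : adj p1 = p1) (p2_herm : adj p2 = p2).
Hypotheses (p1_idem : p1 *m p1 = p1) (p2_idem : p2 *m p2 = p2).
Hypotheses (tr_p1 : \tr p1 = t) (tr_p2 : \tr p2 = t) (q_real : conjc q = q).
Hypothesis traces :
  forall m, (1 <= m <= 3)%N -> \tr ((p1 *m p2) ^+ m) = t + (q ^+ m - 1) * k.

Lemma diff_eq_of_traces : p1 *m p2 *m p1 - p2 *m p1 *m p2 = q *: (p1 - p2).
Proof.
have traces21 m : (1 <= m <= 3)%N -> \tr ((p2 *m p1) ^+ m) = t + (q ^+ m - 1) * k.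
  by case: m => // m; rewrite mxtrace_mulC_exp; apply: traces.
pose E := p1 *m p2 *m p1 - p2 *m p1 *m p2 - q *: (p1 - p2).
have E_herm : adj E = E.
  by rewrite /E !adjB adjZ q_real adjB !adjM p1_herm p2_herm !mulmxA.
have p1E : p1 *m E = 0.
  exact: (p1_mul_defect_eq0 p1_herm p2_herm p1_idem p2_idem tr_p1 traces q_real).
have p2E : p2 *m E = 0.
  have -> : E = - (p2 *m p1 *m p2 - p1 *m p2 *m p1 - q *: (p2 - p1)).
    by rewrite /E -[_ - p1 *m p2 *m p1]opprB -[p2 - p1]opprB scalerN opprD !opprK.
  rewrite mulmxN (p1_mul_defect_eq0 p2_herm p1_herm p2_idem p1_idem tr_p2 traces21 q_real).
  exact: oppr0.
have Ep1 : E *m p1 = 0 by rewrite -E_herm -p1_herm -adjM p1E adj0.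
have Ep2 : E *m p2 = 0 by rewrite -E_herm -p2_herm -adjM p2E adj0.
have EE : E *m E = 0.
  by rewrite {2}/E !mulmxBr -scalemxAr mulmxBr !mulmxA Ep1 Ep2 !mul0mx subrr scaler0 subrr.
by apply/eqP; rewrite -subr_eq0 -/E (herm_sqr_eq0 E_herm EE).
Qed.

End SymmetricTraceCondition.

Section MxtensIndex.
Local Notation idx := (@mxtens_index _ _).

Lemma sum_mxtens_index (V : nmodType) p q (F : 'I_(p * q) -> V) :
  \sum_i F i = \sum_(a < p) \sum_(b < q) F (idx (a, b)).
Proof.
rewrite pair_big /=; apply: reindex => /=.
by exists (@mxtens_unindex p q) => [[a b]|i] _; rewrite ?mxtens_indexK ?mxtens_unindexK.
Qed.

Lemma mxtens_index_eq p q (a a' : 'I_p) (b b' : 'I_q) :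
  (idx (a, b) == idx (a', b')) = (a == a') && (b == b').
Proof. by rewrite (can_eq (@mxtens_indexK p q)) xpair_eqE. Qed.

Lemma sum_delta (R : pzSemiRingType) (I : finType) (a : I) (F : I -> R) :
  \sum_i (a == i)%:R * F i = F a.
Proof.
rewrite (bigD1 a) //= eqxx mul1r big1 ?addr0 // => i i_neq_a.
by rewrite eq_sym (negbTE i_neq_a) mul0r.
Qed.

Lemma tens_delta_mx (R : pzRingType) p q (a c : 'I_p) (b d : 'I_q) :
  delta_mx a c *t delta_mx b d = delta_mx (idx (a, b)) (idx (c, d)) :> 'M[R]_(p * q).
Proof.
apply/matrixP => i j; case: (mxtens_indexP i) => a' b'; case: (mxtens_indexP j) => c' d'.
by rewrite tensmxE !mxE !mxtens_index_eq -natrM mulnb andbACA.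
Qed.

End MxtensIndex.

Section Ampliation.
Variables (R : realType) (n : nat).
Local Notation C := R[i].
Local Notation idx := (@mxtens_index _ _).
Implicit Types P Q : 'M[C]_(n * n).

Lemma P1_index P ab c ab' c' :
  P1 P (idx (ab, c)) (idx (ab', c')) = P ab ab' * (c == c')%:R.
Proof. by rewrite tensmxE mxE. Qed.

Lemma P2_index P a b c a' b' c' :
  P2 P (idx (idx (a, b), c)) (idx (idx (a', b'), c'))
  = (a == a')%:R * P (idx (b, c)) (idx (b', c')).
Proof.
have reassoc a1 b1 c1 : cast_ord (esym (mulnA n n n)) (idx (idx (a1, b1), c1))
                        = idx (a1, idx (b1, c1)) :> 'I_(n * (n * n)).
  by apply: val_inj => /=; rewrite mulnDl -mulnA addnA.
by rewrite castmxE !reassoc tensmxE mxE.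
Qed.

Lemma adj_P1 P : adj (P1 P) = P1 (adj P).
Proof. by rewrite adj_tens adj1. Qed.

Lemma adj_P2 P : adj (P2 P) = P2 (adj P).
Proof. by rewrite adj_castmx adj_tens adj1. Qed.

Lemma P1_mul P Q : P1 P *m P1 Q = P1 (P *m Q).
Proof. by rewrite tensmx_mul mulmx1. Qed.

Lemma P2_mul P Q : P2 P *m P2 Q = P2 (P *m Q).
Proof. by rewrite -castmx_mulmx tensmx_mul mulmx1. Qed.

Lemma mxtrace_P1 P : \tr (P1 P) = \tr P * n%:R.
Proof. by rewrite mxtrace_tens mxtrace1. Qed.

Lemma mxtrace_P2 P : \tr (P2 P) = \tr P * n%:R.
Proof. by rewrite mxtrace_castmx mxtrace_tens mxtrace1 mulrC. Qed.

Lemma P2_1 : P2 (1%:M : 'M[C]_(n * n)) = 1%:M.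
Proof.
apply/matrixP => i j.
case: (mxtens_indexP i) => ab c; case: (mxtens_indexP ab) => a b.
case: (mxtens_indexP j) => ab' c'; case: (mxtens_indexP ab') => a' b'.
by rewrite P2_index !mxE !mxtens_index_eq -natrM mulnb andbA.
Qed.

End Ampliation.

Section Family.
Variables (R : realType) (n r : nat) (V : 'I_r -> 'M[R[i]]_n).
Local Notation C := R[i].
Local Notation idx := (@mxtens_index _ _).
Local Notation unidx := (@mxtens_unindex _ _).

Definition vecV : 'M[C]_(n * n, r) := \matrix_(i, s) V s (unidx i).1 (unidx i).2.

Lemma vecV_index a b s : vecV (idx (a, b)) s = V s a b.
Proof. by rewrite mxE mxtens_indexK. Qed.

Lemma PT_vecV : PT V = vecV *m adj vecV.
Proof.
have -> : PT V = \sum_s \sum_(i < n * n) \sum_(j < n * n)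
                   (vecV i s * (vecV j s)^*) *: delta_mx i j.
  apply: eq_bigr => s _; rewrite sum_mxtens_index; apply: eq_bigr => a _.
  apply: eq_bigr => b _; rewrite sum_mxtens_index; apply: eq_bigr => c _.
  by apply: eq_bigr => d _; rewrite /E tens_delta_mx !vecV_index mxE.
rewrite [RHS]matrix_sum_delta exchange_big; apply: eq_bigr => i _.
rewrite exchange_big; apply: eq_bigr => j _.
by rewrite -scaler_suml mxE; congr (_ *: _); apply: eq_bigr => s _; rewrite adjE.
Qed.

Lemma AT_index s j m l :
  AT V (idx (s, j)) (idx (m, l))
  = \sum_t \sum_z \sum_y \sum_x V t j x * (V s x y)^* * V m z y * (V t l z)^*.
Proof.
pose F s' m' := (\sum_t V t *m mxconj (V s') *m (V m')^T *m adj (V t)) j l.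
transitivity (\sum_s' (s == s')%:R * \sum_m' (m == m')%:R * F s' m').
  rewrite /AT summxE; apply: eq_bigr => s' _; rewrite summxE mulr_sumr.
  by apply: eq_bigr => m' _; rewrite tensmxE {1}mxE mulrA -natrM mulnb.
rewrite sum_delta sum_delta /F summxE; apply: eq_bigr => t _.
rewrite mxE; apply: eq_bigr => z _; rewrite mxE mulr_suml; apply: eq_bigr => y _.
by rewrite mxE !mulr_suml; apply: eq_bigr => x _; rewrite !mxE.
Qed.

Lemma PT_herm : adj (PT V) = PT V.
Proof. by rewrite PT_vecV adjM adjK. Qed.

Definition liftV : 'M[C]_(n * n * n, r * n) :=
  \matrix_(i, k) (((unidx (unidx i).1).1 == (unidx k).2)%:R
                  * V (unidx k).1 (unidx (unidx i).1).2 (unidx i).2).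

Lemma liftV_index a b c s j :
  liftV (idx (idx (a, b), c)) (idx (s, j)) = (a == j)%:R * V s b c.
Proof. by rewrite mxE !mxtens_indexK. Qed.

Lemma liftV_mul_adj : liftV *m adj liftV = P2 (PT V).
Proof.
apply/matrixP => i i'.
case: (mxtens_indexP i) => ab c; case: (mxtens_indexP ab) => a b.
case: (mxtens_indexP i') => ab' c'; case: (mxtens_indexP ab') => a' b'.
rewrite P2_index PT_vecV !mxE sum_mxtens_index mulr_sumr; apply: eq_bigr => s _.
transitivity (\sum_j (a == j)%:R * (V s b c * ((a' == j)%:R * V s b' c')^*)).
  by apply: eq_bigr => j _; rewrite adjE !liftV_index mulrA.
by rewrite sum_delta adjE !vecV_index rmorphM rmorph_nat mulrCA eq_sym.
Qed.

Lemma liftV_P1_index s j a b c :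
  (adj liftV *m P1 (PT V)) (idx (s, j)) (idx (idx (a, b), c))
  = \sum_x (V s x c)^* * \sum_t V t j x * (V t a b)^*.
Proof.
rewrite mxE !sum_mxtens_index.
transitivity (\sum_a' (j == a')%:R * \sum_x \sum_c' (c == c')%:R
                * ((V s x c')^* * PT V (idx (a', x)) (idx (a, b)))).
  apply: eq_bigr => a' _; rewrite mulr_sumr; apply: eq_bigr => x _.
  rewrite mulr_sumr; apply: eq_bigr => c' _.
  by rewrite adjE liftV_index P1_index rmorphM rmorph_nat !(eq_sym a') (eq_sym c'); ring.
rewrite sum_delta; apply: eq_bigr => x _; rewrite sum_delta PT_vecV mxE; congr (_ * _).
by apply: eq_bigr => t _; rewrite adjE !vecV_index.
Qed.

Lemma liftV_P1_liftV_index s j m l :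
  (adj liftV *m P1 (PT V) *m liftV) (idx (s, j)) (idx (m, l))
  = \sum_t \sum_z \sum_y \sum_x V t j x * (V s x y)^* * V m z y * (V t l z)^*.
Proof.
rewrite mxE !sum_mxtens_index.
transitivity (\sum_a' (l == a')%:R * \sum_z \sum_y
                (\sum_x (V s x y)^* * \sum_t V t j x * (V t a' z)^*) * V m z y).
  apply: eq_bigr => a' _; rewrite mulr_sumr; apply: eq_bigr => z _.
  rewrite mulr_sumr; apply: eq_bigr => y _.
  by rewrite liftV_P1_index liftV_index mulrCA eq_sym.
rewrite sum_delta [RHS]exchange_big; apply: eq_bigr => z _.
rewrite [RHS]exchange_big; apply: eq_bigr => y _.
rewrite [RHS]exchange_big mulr_suml; apply: eq_bigr => x _.
by rewrite mulr_sumr mulr_suml; apply: eq_bigr => t _; ring.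
Qed.

Lemma liftV_P1_liftV : adj liftV *m P1 (PT V) *m liftV = AT V.
Proof.
apply/matrixP => sj ml; case: (mxtens_indexP sj) => s j; case: (mxtens_indexP ml) => m l.
by rewrite liftV_P1_liftV_index AT_index.
Qed.

Lemma mxtrace_AT_exp m : \tr (AT V ^+ m.+1) = \tr ((P1 (PT V) *m P2 (PT V)) ^+ m.+1).
Proof. by rewrite -liftV_P1_liftV -mulmxA mxtrace_mulC_exp -mulmxA liftV_mul_adj. Qed.

Hypothesis ortho : forall s m : 'I_r, \tr (adj (V s) *m V m) = (s == m)%:R.

Lemma vecV_isometry : adj vecV *m vecV = 1%:M.
Proof.
apply/matrixP => s u; rewrite mxE [RHS]mxE -ortho /mxtrace sum_mxtens_index exchange_big.
by apply: eq_bigr => b _; rewrite mxE; apply: eq_bigr => a _; rewrite !adjE !vecV_index.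
Qed.

Lemma PT_idem : PT V *m PT V = PT V.
Proof. by rewrite PT_vecV mulmxA -(mulmxA vecV) vecV_isometry mulmx1. Qed.

Lemma mxtrace_PT : \tr (PT V) = r%:R.
Proof. by rewrite PT_vecV mxtrace_mulC vecV_isometry mxtrace1. Qed.

Local Notation P1T := (P1 (PT V)).
Local Notation P2T := (P2 (PT V)).

Let P1T_herm : adj P1T = P1T. Proof. by rewrite adj_P1 PT_herm. Qed.
Let P2T_herm : adj P2T = P2T. Proof. by rewrite adj_P2 PT_herm. Qed.
Let P1T_idem : P1T *m P1T = P1T. Proof. by rewrite P1_mul PT_idem. Qed.
Let P2T_idem : P2T *m P2T = P2T. Proof. by rewrite P2_mul PT_idem. Qed.
Let mxtrace_P1T : \tr P1T = (r * n)%:R. Proof. by rewrite mxtrace_P1 mxtrace_PT -natrM. Qed.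
Let mxtrace_P2T : \tr P2T = (r * n)%:R. Proof. by rewrite mxtrace_P2 mxtrace_PT -natrM. Qed.

Lemma mxtrace_AT_exp_of_solution (Q : R) : 0 < Q -> is_solution Q (PT V) ->
  forall m, \tr (AT V ^+ m.+1)
    = (r * n)%:R + ((Q ^- (2 * m.+1) - 1) * ((\rank (P1T - P2T))%:R / 2))%:C.
Proof.
move=> Q_gt0 [_ _ sol] m.
have XY : P1T *m P2T *m P1T - P2T *m P1T *m P2T = (Q ^- 2)%:C *: (P1T - P2T).
  by rewrite -sol scalerA mulrC complex_exp2_invexp2 ?scale1r // gt_eqF.
rewrite mxtrace_AT_exp -(mxtrace_compress_exp _ P1T_idem).
rewrite (mxtrace_compress_exp_rank P1T_herm P2T_herm P1T_idem P2T_idem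
          mxtrace_P1T mxtrace_P2T XY).
by rewrite real_complex_invexp2 fmorph_div !rmorph_nat.
Qed.

Lemma nontrivial_solution_of_AT_traces (Q : R) k : (0 < r)%N -> 1 < Q -> (0 < k)%N ->
  (forall m, (1 <= m <= 3)%N ->
     \tr (AT V ^+ m) = (r * n)%:R + ((Q ^- (2 * m) - 1) * k%:R)%:C) ->
  nontrivial_solution Q (PT V).
Proof.
move=> r_gt0 Q_gt1 k_gt0 traces; have Q_gt0 : 0 < Q := lt_trans ltr01 Q_gt1.
have tracesC m : (1 <= m <= 3)%N ->
    \tr ((P1T *m P2T) ^+ m) = (r * n)%:R + ((Q ^- 2)%:C ^+ m - 1) * k%:R.
  by case: m => // m m_range; rewrite -mxtrace_AT_exp traces // real_complex_invexp2 rmorph_nat.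
have XY := diff_eq_of_traces P1T_herm P2T_herm P1T_idem P2T_idem mxtrace_P1T mxtrace_P2T
  (conjc_real _) tracesC.
split; first split.
- exact: PT_herm.
- exact: PT_idem.
- by rewrite XY scalerA complex_exp2_invexp2 ?scale1r // gt_eqF.
- apply/eqP => P_eq0; move: r_gt0; rewrite lt0n -(pnatr_eq0 C) -mxtrace_PT.
  by rewrite P_eq0 mxtrace0 eqxx.
- apply/eqP => P_eq1; have := traces 1%N isT.
  rewrite mxtrace_AT_exp expr1 {2}P_eq1 P2_1 mulmx1 mxtrace_P1T -[LHS]addr0.
  move=> /addrI/esym/eqP; rewrite fmorph_eq0 mulf_eq0 pnatr_eq0 (gtn_eqF k_gt0) orbF.
  by rewrite subr_eq0 invr_eq1 pexprn_eq1 ?ltW // (gt_eqF Q_gt1).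
Qed.

End Family.

Theorem proposition5 (R : realType) (n r : nat) (V : 'I_r -> 'M[R[i]]_n) :
  (2 <= n)%N -> (0 < r)%N ->
  (forall s m : 'I_r, \tr (adj (V s) *m V m) = (s == m)%:R) ->
  (* (a) *)
  (forall Q : R, 0 < Q -> nontrivial_solution Q (PT V) ->
     forall m : nat, (1 <= m)%N ->
       \tr (AT V ^+ m) =
         (r * n)%:R + ((Q ^- (2 * m) - 1) * ((\rank (P1 (PT V) - P2 (PT V)))%:R / 2))%:C)
  /\
  (* (b) *)
  (forall (Q : R) (k : nat), 1 < Q -> (0 < k)%N ->
     (forall m : nat, (1 <= m <= 3)%N ->
        \tr (AT V ^+ m) = (r * n)%:R + ((Q ^- (2 * m) - 1) * k%:R)%:C) ->
     nontrivial_solution Q (PT V)).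
Proof.
move=> _ r_gt0 ortho.
split=> [Q Q_gt0 [sol _ _] [//|m] _ | Q k Q_gt1 k_gt0].
  exact: (mxtrace_AT_exp_of_solution ortho Q_gt0 sol).
exact: (nontrivial_solution_of_AT_traces ortho r_gt0 Q_gt1 k_gt0).
Qed.
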